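(* Let $n,m$ be such that $\Gamma_{n,m}$ is defined, and consider a nearest-neighbour random walk on $\Gamma_{n,m}$ whose step distribution $\mu$ on $\{r_1,\dots,r_n\}$ satisfies $\mu(r_i)>0$ for all $1\le i\le n$. Let $g\in\Gamma_{n,m}$ be hyperbolic, i.e. there is a geodesic line $\xi\subset\mathbb{H}^2$ and $L>0$ with $d_{\mathbb{H}^2}(x,g.x)=L$ for all $x\in\xi$. Suppose $g=s_1\cdots s_{|g|}$ with each $s_j\in\{r_1,\dots,r_n\}$, where $|g|$ is the word length of $g$ with respect to $\{r_1,\dots,r_n\}$, and suppose \[ L > -\sum_{j=1}^{|g|}\log\mu(s_j). \] Then for any choice of base point $x_0\in\mathbb{H}^2$ (with trivial stabilizer) defining the geometric distance $d_{\mathbb{H}^2}$, \[ \sup_{k\ge 1}\,\bigl| d_\mu(e,g^k)-d_{\mathbb{H}^2}(e,g^k)\bigr| = \infty . \]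
   Context: $\Delta_{n,m}$ is a regular hyperbolic polygon with $n$ sides and interior angles $\frac{2\pi}{m}$ ($m\ge4$ even); $\Gamma_{n,m}$ is the group generated by the reflections $r_1,\dots,r_n$ in its sides. Geometric distance: for $x_0\in\mathbb{H}^2$ with trivial stabilizer, $d_{\mathbb{H}^2}(g,h)=d_{\mathbb{H}^2}(g.x_0,h.x_0)$. The random walk is $X_k=\xi_1\cdots\xi_k$, $X_0=e$, $\xi_i$ i.i.d. with law $\mu$. The first-entrance function is $F_\mu(x,y)=\mathbb{P}^e(\exists k: X_k=x^{-1}y)$ and the Green metric is $d_\mu(x,y)=-\log F_\mu(x,y)$. *)

From Stdlib Require Import Reals Lra List Arith ClassicalDescription.
From Coquelicot Require Import Coquelicot.
Import ListNotations.
Open Scope R_scope.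

Definition vec := (R * R * R)%type.

Definition vadd (x y : vec) : vec :=
  let '(a1, a2, a3) := x in let '(b1, b2, b3) := y in (a1 + b1, a2 + b2, a3 + b3).
Definition vscale (c : R) (x : vec) : vec :=
  let '(a1, a2, a3) := x in (c * a1, c * a2, c * a3).

Definition lor (x y : vec) : R :=
  let '(a1, a2, a3) := x in let '(b1, b2, b3) := y in a1 * b1 + a2 * b2 - a3 * b3.

(** Points of the hyperbolic plane: upper sheet of the hyperboloid. *)
Definition H2 (x : vec) : Prop := lor x x = -1 /\ 0 < snd x.

Definition acosh (t : R) : R := ln (t + sqrt (t * t - 1)).

Definition hdist (x y : vec) : R := acosh (- lor x y).

(** Geodesic lines of H^2: intersections of H^2 with the Lorentz-orthogonal
    complement of a spacelike vector v. *)
Definition geodesic_line (v : vec) : vec -> Prop := fun x => H2 x /\ lor x v = 0.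

(** Reflection in the geodesic orthogonal to a spacelike unit vector v. *)
Definition refl (v : vec) (x : vec) : vec := vadd x (vscale (- (2 * lor x v)) v).

(** Gamma_{n,m} is defined: n >= 3 sides, m >= 4 even, and the regular
    n-gon with interior angles 2pi/m exists in H^2, i.e. n*(2pi/m) < (n-2)pi. *)
Definition Gamma_defined (n m : nat) : Prop :=
  (3 <= n)%nat /\ (4 <= m)%nat /\ Nat.Even m /\ (2 * n < m * (n - 2))%nat.

(** Regular n-gon centred at (0,0,1) with interior angles 2pi/m: its sides
    lie on the geodesics orthogonal to the unit spacelike vectors
    nv i = (cosh rho cos(2 pi i/n), cosh rho sin(2 pi i/n), sinh rho), where the
    inradius rho is given by cosh rho = cos(pi/m) / sin(pi/n).  Then
    <nv i, nv (i+1)> = - cos(2 pi/m), i.e. adjacent sides meet at angle 2pi/m. *)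
Definition ch_rho (n m : nat) : R := cos (PI / INR m) / sin (PI / INR n).
Definition sh_rho (n m : nat) : R := sqrt (ch_rho n m * ch_rho n m - 1).

Definition nv (n m : nat) (i : nat) : vec :=
  (ch_rho n m * cos (2 * PI * INR i / INR n),
   ch_rho n m * sin (2 * PI * INR i / INR n),
   sh_rho n m).

(** The generators r_i (i < n), reflections in the sides of Delta_{n,m};
    group elements are isometries, represented as maps vec -> vec. *)
Definition gen (n m : nat) (i : nat) : vec -> vec := refl (nv n m i).

Definition valid_word (n : nat) (w : list nat) : Prop := List.Forall (fun i => (i < n)%nat) w.

Fixpoint weval (n m : nat) (w : list nat) : vec -> vec :=
  match w with
  | [] => fun x => x
  | i :: w' => fun x => gen n m i (weval n m w' x)
  end.

Definition in_Gamma (n m : nat) (g : vec -> vec) : Prop :=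
  exists w, valid_word n w /\ weval n m w = g.

Definition word_length_is (n m : nat) (g : vec -> vec) (k : nat) : Prop :=
  (exists w, valid_word n w /\ length w = k /\ weval n m w = g) /\
  (forall w, valid_word n w -> weval n m w = g -> (k <= length w)%nat).

Definition hyperbolic_with (g : vec -> vec) (L : R) : Prop :=
  0 < L /\ exists v, 0 < lor v v /\
    forall x, geodesic_line v x -> hdist x (g x) = L.

Definition gpow (g : vec -> vec) (k : nat) : vec -> vec :=
  Nat.iter k (fun f => fun x => g (f x)) (fun x => x).

Fixpoint words (n k : nat) : list (list nat) :=
  match k with
  | O => [[]]
  | S k' => flat_map (fun i => map (cons i) (words n k')) (seq 0 n)
  end.

Definition sumR (l : list R) : R := fold_right Rplus 0 l.
Definition prodR (l : list R) : R := fold_right Rmult 1 l.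

Definition indic (P : Prop) : R := if excluded_middle_informative P then 1 else 0.

(** The trajectory xi_1 ... xi_k of the walk first hits x at time |w|
    exactly when the increments are w, eval w = x and no proper prefix
    evaluates to x.  The probability of that event is prod mu(w_j). *)
Definition first_hit_weight (n m : nat) (mu : nat -> R) (x : vec -> vec)
    (w : list nat) : R :=
  indic (weval n m w = x /\
         forall j, (j < length w)%nat -> weval n m (firstn j w) <> x)
  * prodR (map mu w).

(** P^e(exists k <= N, X_k = x). *)
Definition hit_upto (n m : nat) (mu : nat -> R) (x : vec -> vec) (N : nat) : R :=
  sumR (map (fun k => sumR (map (first_hit_weight n m mu x) (words n k)))
            (seq 0 (S N))).

Definition hit_prob (n m : nat) (mu : nat -> R) (x : vec -> vec) : R :=
  real (Lim_seq (hit_upto n m mu x)).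

(** First-entrance function F_mu(x,y) = P^e(exists k, X_k = x^{-1} y) and
    Green metric d_mu = - log F_mu; we only need x = e. *)
Definition F_mu_e (n m : nat) (mu : nat -> R) (y : vec -> vec) : R := hit_prob n m mu y.
Definition d_mu_e (n m : nat) (mu : nat -> R) (y : vec -> vec) : R :=
  - ln (F_mu_e n m mu y).

Definition d_geo_e (x0 : vec) (y : vec -> vec) : R := hdist x0 (y x0).

Definition trivial_stabilizer (n m : nat) (x0 : vec) : Prop :=
  forall w, valid_word n w -> weval n m w x0 = x0 -> weval n m w = (fun x => x).

From Stdlib Require Import Reals List Lra Psatz Lia Wf_nat ClassicalDescription
  FunctionalExtensionality.
From Coquelicot Require Import Coquelicot.
Open Scope R_scope.

(** The walk can follow the word [s] repeatedly, so
    [F_mu(e, g^k) >= (prod_j mu(s_j))^k], i.e. [d_mu(e, g^k) <= k S] with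
    [S = - sum_j log mu(s_j) < L].  On the hyperboloid, [g] is a Lorentz
    transformation translating its axis by [L]: in a Lorentz frame adapted to
    the axis it scales the two null directions of the axis plane by
    [e^L], [e^-L] and maps the normal direction to [+-] itself.  This gives
    [cosh d(x0, g^k x0) >= cosh (k L) >= e^(kL) / 2] for every point [x0], so
    [d_geo(e, g^k) - d_mu(e, g^k) >= k (L - S) - log 2], which is unbounded. *)

Ltac destruct_vec x :=
  let a := fresh "a" in let b := fresh "b" in let c := fresh "c" in destruct x as [[a b] c].

Ltac vec_ring := simpl; apply (f_equal2 pair); [apply (f_equal2 pair)|]; ring.

Definition det3 (a1 a2 a3 b1 b2 b3 c1 c2 c3 : R) : R :=
  a1 * (b2 * c3 - b3 * c2) - a2 * (b1 * c3 - b3 * c1) + a3 * (b1 * c2 - b2 * c1).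

Lemma det3_kernel a1 a2 a3 b1 b2 b3 c1 c2 c3 x1 x2 x3 :
  a1 * x1 + a2 * x2 + a3 * x3 = 0 -> b1 * x1 + b2 * x2 + b3 * x3 = 0 ->
  c1 * x1 + c2 * x2 + c3 * x3 = 0 ->
  let d := det3 a1 a2 a3 b1 b2 b3 c1 c2 c3 in d * x1 = 0 /\ d * x2 = 0 /\ d * x3 = 0.
Proof.
  intros Ha Hb Hc d; unfold d, det3; repeat split.
  - replace (_ * x1) with ((b2 * c3 - b3 * c2) * (a1 * x1 + a2 * x2 + a3 * x3)
      - (a2 * c3 - a3 * c2) * (b1 * x1 + b2 * x2 + b3 * x3)
      + (a2 * b3 - a3 * b2) * (c1 * x1 + c2 * x2 + c3 * x3)) by ring.
    rewrite Ha, Hb, Hc; ring.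
  - replace (_ * x2) with (- (b1 * c3 - b3 * c1) * (a1 * x1 + a2 * x2 + a3 * x3)
      + (a1 * c3 - a3 * c1) * (b1 * x1 + b2 * x2 + b3 * x3)
      - (a1 * b3 - a3 * b1) * (c1 * x1 + c2 * x2 + c3 * x3)) by ring.
    rewrite Ha, Hb, Hc; ring.
  - replace (_ * x3) with ((b1 * c2 - b2 * c1) * (a1 * x1 + a2 * x2 + a3 * x3)
      - (a1 * c2 - a2 * c1) * (b1 * x1 + b2 * x2 + b3 * x3)
      + (a1 * b2 - a2 * b1) * (c1 * x1 + c2 * x2 + c3 * x3)) by ring.
    rewrite Ha, Hb, Hc; ring.
Qed.

Definition lcomb (f0 f1 f2 : vec) (p q r : R) : vec :=
  vadd (vscale p f0) (vadd (vscale q f1) (vscale r f2)).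

Lemma lor_sym x y : lor x y = lor y x.
Proof. destruct_vec x; destruct_vec y; simpl; ring. Qed.

Lemma lor_vscale_l c x y : lor (vscale c x) y = c * lor x y.
Proof. destruct_vec x; destruct_vec y; simpl; ring. Qed.

Lemma lor_vscale_r c x y : lor x (vscale c y) = c * lor x y.
Proof. destruct_vec x; destruct_vec y; simpl; ring. Qed.

Lemma lor_lcomb_l f0 f1 f2 p q r y :
  lor (lcomb f0 f1 f2 p q r) y = p * lor f0 y + q * lor f1 y + r * lor f2 y.
Proof. destruct_vec f0; destruct_vec f1; destruct_vec f2; destruct_vec y; simpl; ring. Qed.

Lemma lor_lcomb_r f0 f1 f2 p q r y :
  lor y (lcomb f0 f1 f2 p q r) = p * lor y f0 + q * lor y f1 + r * lor y f2.
Proof. rewrite lor_sym, lor_lcomb_l, !(lor_sym y); reflexivity. Qed.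

Lemma lcomb_vscale f0 f1 f2 c0 c1 c2 p q r :
  lcomb (vscale c0 f0) (vscale c1 f1) (vscale c2 f2) p q r =
  lcomb f0 f1 f2 (c0 * p) (c1 * q) (c2 * r).
Proof.
  destruct_vec f0; destruct_vec f1; destruct_vec f2; vec_ring.
Qed.

(** The rows of the determinant are the covectors [lor x], [lor y], [lor z]. *)
Definition ldet (x y z : vec) : R :=
  let '(x1, x2, x3) := x in let '(y1, y2, y3) := y in let '(z1, z2, z3) := z in
  det3 x1 x2 (- x3) y1 y2 (- y3) z1 z2 (- z3).

Lemma ldet_sq x y z :
  ldet x y z * ldet x y z =
  - det3 (lor x x) (lor x y) (lor x z) (lor y x) (lor y y) (lor y z) (lor z x) (lor z y) (lor z z).
Proof. destruct_vec x; destruct_vec y; destruct_vec z; unfold ldet, det3; simpl; ring. Qed.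

Definition lorentz_frame (e0 e1 u : vec) : Prop :=
  lor e0 e0 = -1 /\ lor e1 e1 = 1 /\ lor u u = 1 /\
  lor e0 e1 = 0 /\ lor e0 u = 0 /\ lor e1 u = 0.

Section Frame.

Variables e0 e1 u : vec.
Hypothesis Hframe : lorentz_frame e0 e1 u.

Lemma lor_lcomb_frame p q r p' q' r' :
  lor (lcomb e0 e1 u p q r) (lcomb e0 e1 u p' q' r') = - p * p' + q * q' + r * r'.
Proof.
  destruct Hframe as (H00 & H11 & Huu & H01 & H0u & H1u).
  rewrite lor_lcomb_l, !lor_lcomb_r, (lor_sym e1 e0), (lor_sym u e0), (lor_sym u e1).
  rewrite H00, H11, Huu, H01, H0u, H1u; ring.
Qed.

Lemma frame_orthogonal_eq0 y :
  lor y e0 = 0 -> lor y e1 = 0 -> lor y u = 0 -> y = (0, 0, 0).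
Proof.
  intros Y0 Y1 Y2.
  assert (D : ldet e0 e1 u * ldet e0 e1 u = 1).
  { destruct Hframe as (H00 & H11 & Huu & H01 & H0u & H1u).
    rewrite ldet_sq, (lor_sym e1 e0), (lor_sym u e0), (lor_sym u e1).
    rewrite H00, H11, Huu, H01, H0u, H1u; unfold det3; ring. }
  revert D Y0 Y1 Y2; destruct_vec e0; destruct_vec e1; destruct_vec u; destruct_vec y.
  simpl; intros D Y0 Y1 Y2.
  destruct (det3_kernel a b (- c) a0 b0 (- c0) a1 b1 (- c1) a2 b2 c2) as (K0 & K1 & K2);
    try lra.
  f_equal; [f_equal|]; nra.
Qed.

Lemma frame_expansion x : x = lcomb e0 e1 u (- lor x e0) (lor x e1) (lor x u).
Proof.
  set (c := lcomb e0 e1 u (- lor x e0) (lor x e1) (lor x u)).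
  assert (Z : lcomb x c e0 1 (-1) 0 = (0, 0, 0)).
  { destruct Hframe as (H00 & H11 & Huu & H01 & H0u & H1u).
    apply frame_orthogonal_eq0; unfold c; rewrite !lor_lcomb_l;
      rewrite ?(lor_sym e1 e0), ?(lor_sym u e0), ?(lor_sym u e1);
      rewrite ?H00, ?H11, ?Huu, ?H01, ?H0u, ?H1u; ring. }
  clearbody c; revert Z; destruct_vec x; destruct_vec c; destruct_vec e0.
  simpl; intros Z; injection Z; intros; f_equal; [f_equal|]; lra.
Qed.

Lemma frame_axis_H2 a b : 0 < snd e0 -> a * a - b * b = 1 -> 0 < a ->
  H2 (lcomb e0 e1 u a b 0).
Proof.
  intros He0 Hab Ha; split; [rewrite lor_lcomb_frame; lra|].
  destruct Hframe as (H00 & H11 & _ & H01 & _ & _).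
  revert He0 H00 H11 H01.
  destruct e0 as [[x0 y0] t0]; destruct e1 as [[x1 y1] t1]; destruct u as [[x2 y2] t2].
  simpl; intros He0 H00 H11 H01.
  assert (Ht : t1 * t1 < t0 * t0).
  { assert (E : (x0 * y1 - y0 * x1) * (x0 * y1 - y0 * x1) =
      (x0 * x0 + y0 * y0) * (x1 * x1 + y1 * y1) - (x0 * x1 + y0 * y1) * (x0 * x1 + y0 * y1))
      by ring.
    replace (x0 * x0 + y0 * y0) with (t0 * t0 - 1) in E by lra.
    replace (x1 * x1 + y1 * y1) with (t1 * t1 + 1) in E by lra.
    replace (x0 * x1 + y0 * y1) with (t0 * t1) in E by lra.
    pose proof (Rle_0_sqr (x0 * y1 - y0 * x1)); unfold Rsqr in *; lra. }
  assert (0 < a * t0) by nra.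
  assert ((b * t1) * (b * t1) < (a * t0) * (a * t0)) by nra.
  nra.
Qed.

End Frame.

Definition lcross (a b : vec) : vec :=
  let '(a1, a2, a3) := a in let '(b1, b2, b3) := b in
  (a2 * b3 - a3 * b2, a3 * b1 - a1 * b3, - (a1 * b2 - a2 * b1)).

Lemma lor_lcross_l a b : lor (lcross a b) a = 0.
Proof. destruct_vec a; destruct_vec b; simpl; ring. Qed.

Lemma lor_lcross_r a b : lor (lcross a b) b = 0.
Proof. destruct_vec a; destruct_vec b; simpl; ring. Qed.

Lemma lor_lcross_lcross a b :
  lor (lcross a b) (lcross a b) = lor a b * lor a b - lor a a * lor b b.
Proof. destruct_vec a; destruct_vec b; simpl; ring. Qed.

(** [w] is a future-pointing timelike vector Lorentz-orthogonal to the
    spacelike [v]; normalising [w] and [v] and completing with their Lorentz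
    cross product gives the frame. *)
Lemma frame_exists v : 0 < lor v v ->
  exists e0 e1 u, lorentz_frame e0 e1 u /\ 0 < snd e0 /\
    forall x, lor x u = 0 -> lor x v = 0.
Proof.
  intros Hv.
  set (w := let '(v1, v2, v3) := v in (v3 * v1, v3 * v2, v1 * v1 + v2 * v2)).
  assert (Hw : lor w w < 0 /\ lor w v = 0 /\ 0 < snd w).
  { unfold w; revert Hv; destruct_vec v; simpl; intros Hv.
    assert (0 < a * a + b * b) by nra.
    split; [|split; [ring|lra]].
    replace (c * a * (c * a) + c * b * (c * b) - (a * a + b * b) * (a * a + b * b))
      with (- ((a * a + b * b) * (a * a + b * b - c * c))) by ring.
    assert (0 < (a * a + b * b) * (a * a + b * b - c * c)) by (apply Rmult_lt_0_compat; lra).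
    lra. }
  destruct Hw as (Hww & Hwv & Hw3); clearbody w.
  set (sw := sqrt (- lor w w)); set (sv := sqrt (lor v v)).
  assert (Psw : 0 < sw) by (apply sqrt_lt_R0; lra).
  assert (Psv : 0 < sv) by (apply sqrt_lt_R0; lra).
  assert (Qsw : sw * sw = - lor w w) by (apply sqrt_sqrt; lra).
  assert (Qsv : sv * sv = lor v v) by (apply sqrt_sqrt; lra).
  set (e0 := vscale (/ sw) w); set (u := vscale (/ sv) v).
  assert (E00 : lor e0 e0 = -1).
  { unfold e0; rewrite lor_vscale_l, lor_vscale_r.
    rewrite <- (Ropp_involutive (lor w w)), <- Qsw; field; lra. }
  assert (Euu : lor u u = 1).
  { unfold u; rewrite lor_vscale_l, lor_vscale_r, <- Qsv; field; lra. }
  assert (E0u : lor e0 u = 0) by (unfold e0, u; rewrite lor_vscale_l, lor_vscale_r, Hwv; ring).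
  exists e0, (lcross u e0), u; split; [|split].
  - unfold lorentz_frame.
    rewrite lor_lcross_lcross, Euu, E00, (lor_sym u e0), E0u.
    rewrite (lor_sym e0 (lcross u e0)), lor_lcross_r, lor_lcross_l.
    repeat split; auto; ring.
  - unfold e0; revert Hw3; destruct_vec w; simpl; intros.
    apply Rmult_lt_0_compat; [apply Rinv_0_lt_compat|]; auto.
  - intros x Hx; unfold u in Hx; rewrite lor_vscale_r in Hx.
    apply Rmult_integral in Hx; destruct Hx as [Hx|Hx]; auto.
    pose proof (Rinv_0_lt_compat sv Psv); lra.
Qed.

Definition linear_map (f : vec -> vec) : Prop :=
  (forall x y, f (vadd x y) = vadd (f x) (f y)) /\ (forall c x, f (vscale c x) = vscale c (f x)).

Definition lorentz_isometry (f : vec -> vec) : Prop := forall x y, lor (f x) (f y) = lor x y.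

Lemma linear_map_lcomb f f0 f1 f2 p q r : linear_map f ->
  f (lcomb f0 f1 f2 p q r) = lcomb (f f0) (f f1) (f f2) p q r.
Proof. intros [Hadd Hscale]; unfold lcomb; rewrite !Hadd, !Hscale; reflexivity. Qed.

Lemma gpow_lcomb_eigen A f0 f1 f2 c0 c1 c2 : linear_map A ->
  A f0 = vscale c0 f0 -> A f1 = vscale c1 f1 -> A f2 = vscale c2 f2 ->
  forall k p q r,
    gpow A k (lcomb f0 f1 f2 p q r) = lcomb f0 f1 f2 (c0 ^ k * p) (c1 ^ k * q) (c2 ^ k * r).
Proof.
  intros HA H0 H1 H2 k; induction k as [|k IH]; intros p q r.
  - simpl; rewrite !Rmult_1_l; reflexivity.
  - change (gpow A (S k) (lcomb f0 f1 f2 p q r)) with (A (gpow A k (lcomb f0 f1 f2 p q r))).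
    rewrite IH, linear_map_lcomb, H0, H1, H2, lcomb_vscale by exact HA.
    simpl; rewrite !Rmult_assoc; reflexivity.
Qed.

Lemma cosh_exp x : cosh x = (exp x + / exp x) / 2.
Proof. unfold cosh; rewrite exp_Ropp; reflexivity. Qed.

Lemma cosh_pos x : 0 < cosh x.
Proof.
  rewrite cosh_exp; pose proof (exp_pos x); pose proof (Rinv_0_lt_compat _ (exp_pos x)); lra.
Qed.

Lemma exp_gt1 x : 0 < x -> 1 < exp x.
Proof. intros Hx; rewrite <- exp_0; apply exp_increasing; exact Hx. Qed.

Lemma ln_nonpos x : x <= 0 -> ln x = 0.
Proof. intros Hx; unfold ln; case (Rlt_dec 0 x); intros; [exfalso; lra | reflexivity]. Qed.

Lemma acosh_eq_cosh t L : 0 < L -> acosh t = L -> t = cosh L.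
Proof.
  intros HL H; unfold acosh in H; rewrite cosh_exp.
  pose proof (exp_gt1 L HL) as HX.
  destruct (Rle_lt_dec (t + sqrt (t * t - 1)) 0) as [Hs|Hs].
  { rewrite ln_nonpos in H; lra. }
  assert (E : t + sqrt (t * t - 1) = exp L) by (rewrite <- H, exp_ln; auto).
  destruct (Rle_lt_dec (t * t - 1) 0) as [Ht|Ht].
  { rewrite sqrt_neg_0 in E by lra; nra. }
  assert (Q : sqrt (t * t - 1) * sqrt (t * t - 1) = t * t - 1) by (apply sqrt_sqrt; lra).
  assert (T : t * (2 * exp L) = exp L * exp L + 1).
  { replace (sqrt (t * t - 1)) with (exp L - t) in Q by lra; nra. }
  apply Rmult_eq_reg_r with (2 * exp L); [rewrite T; field|]; lra.
Qed.

Lemma ln_le_acosh t : 0 < t -> ln t <= acosh t.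
Proof.
  intros Ht; unfold acosh; pose proof (sqrt_pos (t * t - 1)); apply ln_le; lra.
Qed.

(** [- <x0, A^k x0>] in the null frame of the axis, where [y], [z] and [e]
    are the eigenvalues of [A^k] on the two null directions and the normal. *)
Lemma pairing_lower_bound a b r y z e :
  - (a + b) * (a + b) + (a - b) * (a - b) + r * r = -1 -> y * z = 1 -> 0 < y -> e * e = 1 ->
  (y + z) / 2 <= - (- (a + b) * (y * a + z * b) + (a - b) * (y * a - z * b) + r * (e * r)).
Proof.
  intros Hx Hyz Hy He.
  assert (Hsum : 2 <= y + z).
  { assert (0 <= y * (y + z - 2)) by (pose proof (Rle_0_sqr (y - 1)); unfold Rsqr in *; nra).
    nra. }
  assert (e <= 1) by nra.
  assert (0 <= r * r * ((y + z) / 2 - e)) by (apply Rmult_le_pos; [apply Rle_0_sqr | lra]).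
  apply Rle_trans with ((1 + r * r) * (y + z) / 2 - e * (r * r)); [lra|].
  replace (1 + r * r) with (4 * a * b) by lra; right; field.
Qed.

Section Translation.

Variables (A : vec -> vec) (e0 e1 u : vec) (L : R).
Hypotheses (HA : linear_map A) (HAiso : lorentz_isometry A)
  (Hframe : lorentz_frame e0 e1 u) (He0 : 0 < snd e0) (HL : 0 < L)
  (Haxis : forall x, H2 x -> lor x u = 0 -> hdist x (A x) = L).

Lemma axis_displacement a b : a * a - b * b = 1 -> 0 < a ->
  a * a * lor (A e0) e0 + a * b * (lor (A e0) e1 + lor (A e1) e0) + b * b * lor (A e1) e1
  = - cosh L.
Proof.
  intros Hab Ha; set (x := lcomb e0 e1 u a b 0).
  assert (Hxu : lor x u = 0).
  { destruct Hframe as (_ & _ & Huu & _ & H0u & H1u).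
    unfold x; rewrite lor_lcomb_l, H0u, H1u, Huu; ring. }
  pose proof (acosh_eq_cosh _ _ HL (Haxis x (frame_axis_H2 _ _ _ Hframe _ _ He0 Hab Ha) Hxu)) as E.
  rewrite <- E; unfold x; rewrite linear_map_lcomb, lor_lcomb_l, !lor_lcomb_r by exact HA.
  rewrite !(lor_sym e0 (A _)), !(lor_sym e1 (A _)), !(lor_sym u (A _)); ring.
Qed.

Let beta := lor (A e0) e1.

(** Three points of the axis determine the Gram entries of [A] on the axis
    plane; being an isometry, [A] then has no [u]-component there. *)
Lemma translation_axis :
  A e0 = lcomb e0 e1 u (cosh L) beta 0 /\ A e1 = lcomb e0 e1 u beta (cosh L) 0 /\
  beta * beta = cosh L * cosh L - 1.
Proof.
  pose proof (axis_displacement 1 0 ltac:(lra) ltac:(lra)) as Q1.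
  pose proof (axis_displacement (5/4) (3/4) ltac:(lra) ltac:(lra)) as Q2.
  pose proof (axis_displacement (5/4) (-3/4) ltac:(lra) ltac:(lra)) as Q3.
  assert (A00 : lor (A e0) e0 = - cosh L) by lra.
  assert (A11 : lor (A e1) e1 = cosh L) by lra.
  assert (A10 : lor (A e1) e0 = - beta) by (unfold beta; lra).
  pose proof (frame_expansion _ _ _ Hframe (A e0)) as X0.
  pose proof (frame_expansion _ _ _ Hframe (A e1)) as X1.
  rewrite A00 in X0; rewrite A11, A10 in X1; fold beta in X0.
  pose proof (HAiso e0 e0) as I00; pose proof (HAiso e1 e1) as I11;
    pose proof (HAiso e0 e1) as I01.
  rewrite X0, X1, lor_lcomb_frame in I01 by exact Hframe.
  rewrite X0, lor_lcomb_frame in I00 by exact Hframe.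
  rewrite X1, lor_lcomb_frame in I11 by exact Hframe.
  destruct Hframe as (H00 & H11 & _ & H01 & _ & _).
  rewrite H00 in I00; rewrite H11 in I11; rewrite H01 in I01.
  assert (G0 : lor (A e0) u = 0) by nra.
  assert (G1 : lor (A e1) u = 0) by nra.
  rewrite G0 in X0; rewrite G1 in X1.
  split; [|split]; [rewrite X0; f_equal; ring | rewrite X1; f_equal; ring | nra].
Qed.

Lemma translation_normal : exists eps, A u = vscale eps u /\ eps * eps = 1.
Proof.
  destruct translation_axis as (S0 & S1 & SB).
  pose proof (frame_expansion _ _ _ Hframe (A u)) as XU.
  pose proof (HAiso u e0) as I0; pose proof (HAiso u e1) as I1; pose proof (HAiso u u) as I2.
  rewrite XU, S0, lor_lcomb_frame in I0 by exact Hframe.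
  rewrite XU, S1, lor_lcomb_frame in I1 by exact Hframe.
  rewrite XU, lor_lcomb_frame in I2 by exact Hframe.
  destruct Hframe as (_ & _ & Huu & _ & H0u & H1u).
  rewrite (lor_sym u e0), H0u in I0; rewrite (lor_sym u e1), H1u in I1; rewrite Huu in I2.
  pose proof (cosh_pos L) as Hc.
  assert (Z0 : lor (A u) e0 = 0).
  { set (a := lor (A u) e0) in *; set (b := lor (A u) e1) in *; set (c := lor (A u) u) in *.
    assert (E : a * (cosh L * cosh L - beta * beta) =
      cosh L * (- - a * cosh L + b * beta + c * 0) - beta * (- - a * beta + b * cosh L + c * 0))
      by ring.
    rewrite I0, I1, SB in E; lra. }
  rewrite Z0 in I0.
  assert (Z1 : lor (A u) e1 = 0) by nra.
  exists (lor (A u) u); split; [|nra].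
  rewrite XU at 1; rewrite Z0, Z1; destruct_vec e0; destruct_vec e1; destruct_vec u; vec_ring.
Qed.

Lemma lcomb_null_frame a b r :
  lcomb (lcomb e0 e1 u 1 1 0) (lcomb e0 e1 u 1 (-1) 0) u a b r = lcomb e0 e1 u (a + b) (a - b) r.
Proof. destruct_vec e0; destruct_vec e1; destruct_vec u; vec_ring. Qed.

(** In the null frame [e0 + e1], [e0 - e1], [u] adapted to the axis, [A]
    is diagonal; [A^k x0] is then explicit. *)
Lemma cosh_gpow_ge x0 k : H2 x0 ->
  ((cosh L + beta) ^ k + (cosh L - beta) ^ k) / 2 <= - lor x0 (gpow A k x0).
Proof.
  intros [Hx0 _].
  destruct translation_axis as (S0 & S1 & SB).
  destruct translation_normal as (eps & Su & Heps).
  set (fp := lcomb e0 e1 u 1 1 0); set (fm := lcomb e0 e1 u 1 (-1) 0).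
  assert (Hfp : A fp = vscale (cosh L + beta) fp).
  { unfold fp; rewrite linear_map_lcomb, S0, S1, Su by exact HA.
    destruct_vec e0; destruct_vec e1; destruct_vec u; vec_ring. }
  assert (Hfm : A fm = vscale (cosh L - beta) fm).
  { unfold fm; rewrite linear_map_lcomb, S0, S1, Su by exact HA.
    destruct_vec e0; destruct_vec e1; destruct_vec u; vec_ring. }
  set (p := - lor x0 e0); set (q := lor x0 e1); set (r := lor x0 u).
  assert (Ex0 : x0 = lcomb fp fm u ((p + q) / 2) ((p - q) / 2) r).
  { unfold fp, fm; rewrite lcomb_null_frame, (frame_expansion _ _ _ Hframe x0) at 1.
    f_equal; unfold p, q; field. }
  rewrite Ex0 in Hx0 |- *.
  rewrite (gpow_lcomb_eigen _ _ _ _ _ _ _ HA Hfp Hfm Su); unfold fp, fm.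
  rewrite !lcomb_null_frame, !lor_lcomb_frame in * by exact Hframe.
  apply pairing_lower_bound with (1 := Hx0).
  - rewrite <- Rpow_mult_distr.
    replace ((cosh L + beta) * (cosh L - beta)) with 1 by nra; apply pow1.
  - pose proof (cosh_pos L); apply pow_lt; nra.
  - rewrite <- Rpow_mult_distr, Heps; apply pow1.
Qed.

Lemma translation_eigenvalues :
  (cosh L + beta = exp L /\ cosh L - beta = / exp L) \/
  (cosh L + beta = / exp L /\ cosh L - beta = exp L).
Proof.
  destruct translation_axis as (_ & _ & SB).
  pose proof (exp_pos L) as HX.
  assert (Z : (beta - (exp L - / exp L) / 2) * (beta + (exp L - / exp L) / 2) = 0).
  { transitivity (beta * beta - ((exp L - / exp L) / 2) * ((exp L - / exp L) / 2)); [ring|].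
    rewrite SB, cosh_exp; field; lra. }
  rewrite cosh_exp.
  apply Rmult_integral in Z; destruct Z; [left|right]; split; lra.
Qed.

Lemma hdist_gpow_ge_frame x0 k : H2 x0 -> INR k * L - ln 2 <= hdist x0 (gpow A k x0).
Proof.
  intros Hx0; pose proof (cosh_gpow_ge x0 k Hx0) as C.
  pose proof (exp_pos L) as HX; pose proof (pow_lt _ k HX) as HXk.
  assert (Hlow : exp L ^ k / 2 <= - lor x0 (gpow A k x0)).
  { pose proof (pow_lt (/ exp L) k (Rinv_0_lt_compat _ HX)).
    destruct translation_eigenvalues as [[Ep Em] | [Ep Em]]; rewrite Ep, Em in C; lra. }
  apply Rle_trans with (ln (exp L ^ k / 2)).
  - unfold Rdiv; rewrite ln_mult, ln_Rinv, ln_pow, ln_exp by lra; lra.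
  - apply Rle_trans with (ln (- lor x0 (gpow A k x0))); [apply ln_le; lra|].
    apply ln_le_acosh; lra.
Qed.

End Translation.

Lemma hdist_gpow_ge A L x0 k : linear_map A -> lorentz_isometry A -> hyperbolic_with A L ->
  H2 x0 -> INR k * L - ln 2 <= hdist x0 (gpow A k x0).
Proof.
  intros HA HAiso [HL (v & Hv & Haxis)] Hx0.
  destruct (frame_exists v Hv) as (e0 & e1 & u & Hframe & He0 & Huv).
  apply (hdist_gpow_ge_frame A e0 e1 u L); auto.
  intros x Hx Hxu; apply Haxis; split; auto.
Qed.

Lemma linear_map_refl v : linear_map (refl v).
Proof.
  unfold refl; split; intros.
  - destruct_vec v; destruct_vec x; destruct_vec y; vec_ring.
  - destruct_vec v; destruct_vec x; vec_ring.
Qed.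

Lemma lorentz_isometry_refl v : lor v v = 1 -> lorentz_isometry (refl v).
Proof.
  intros Hv x y; unfold refl.
  transitivity (lor x y + 4 * lor x v * lor y v * (lor v v - 1)); [|rewrite Hv; ring].
  destruct_vec v; destruct_vec x; destruct_vec y; simpl; ring.
Qed.

Lemma Gamma_defined_angles n m : Gamma_defined n m ->
  3 <= INR n /\ 4 <= INR m /\ PI / INR n + PI / INR m <= PI / 2.
Proof.
  intros (Hn & Hm & _ & Hnm).
  assert (Hnat : (2 * n + 2 * m <= m * n)%nat) by nia.
  apply le_INR in Hnat; rewrite plus_INR, !mult_INR in Hnat; simpl in Hnat.
  apply le_INR in Hn; apply le_INR in Hm; simpl in Hn, Hm.
  split; [lra|split; [lra|]].
  pose proof PI_RGT_0.
  assert (E : PI / 2 - (PI / INR n + PI / INR m) =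
    PI * (INR m * INR n - 2 * INR n - 2 * INR m) / (2 * INR m * INR n)) by (field; lra).
  assert (0 <= PI * (INR m * INR n - 2 * INR n - 2 * INR m) / (2 * INR m * INR n)); [|lra].
  apply Rmult_le_pos; [apply Rmult_le_pos; lra|].
  apply Rlt_le, Rinv_0_lt_compat; nra.
Qed.

(** This is where the existence of [Delta_{n,m}] enters: its inradius is real. *)
Lemma ch_rho_ge1 n m : Gamma_defined n m -> 1 <= ch_rho n m.
Proof.
  intros H; destruct (Gamma_defined_angles n m H) as (Hn & Hm & Hsum).
  pose proof PI_RGT_0.
  assert (0 < PI / INR n) by (apply Rdiv_lt_0_compat; lra).
  assert (0 < PI / INR m) by (apply Rdiv_lt_0_compat; lra).
  assert (Hsin : 0 < sin (PI / INR n)) by (apply sin_gt_0; lra).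
  assert (sin (PI / INR n) <= cos (PI / INR m)).
  { rewrite <- sin_shift; apply sin_incr_1; lra. }
  unfold ch_rho; apply Rmult_le_reg_r with (sin (PI / INR n)); [lra|].
  unfold Rdiv; rewrite Rmult_assoc, Rinv_l; lra.
Qed.

Lemma nv_unit n m i : Gamma_defined n m -> lor (nv n m i) (nv n m i) = 1.
Proof.
  intros H; pose proof (ch_rho_ge1 n m H) as C.
  unfold nv, sh_rho; simpl.
  set (c := ch_rho n m) in *; set (t := 2 * PI * INR i / INR n).
  rewrite sqrt_sqrt by nra.
  pose proof (sin2_cos2 t) as SC; unfold Rsqr in SC.
  transitivity (c * c * (sin t * sin t + cos t * cos t) - (c * c - 1)); [ring|].
  rewrite SC; ring.
Qed.

Lemma weval_app n m w1 w2 x : weval n m (w1 ++ w2) x = weval n m w1 (weval n m w2 x).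
Proof. induction w1 as [|i w1 IH]; simpl; [|rewrite IH]; reflexivity. Qed.

Section Gamma.

Variables n m : nat.
Hypothesis Hnm : Gamma_defined n m.

Lemma linear_map_weval w : linear_map (weval n m w).
Proof.
  induction w as [|i w [IHadd IHscale]]; simpl; [split; reflexivity|].
  destruct (linear_map_refl (nv n m i)) as [Radd Rscale].
  split; intros; unfold gen; rewrite ?IHadd, ?IHscale, ?Radd, ?Rscale; reflexivity.
Qed.

Lemma lorentz_isometry_weval w : lorentz_isometry (weval n m w).
Proof.
  induction w as [|i w IH]; simpl; intros x y; [reflexivity|].
  unfold gen; rewrite lorentz_isometry_refl by (apply nv_unit, Hnm); apply IH.
Qed.

End Gamma.

Lemma sumR_app l1 l2 : sumR (l1 ++ l2) = sumR l1 + sumR l2.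
Proof. induction l1 as [|x l1 IH]; simpl; [|rewrite IH]; ring. Qed.

Lemma prodR_app l1 l2 : prodR (l1 ++ l2) = prodR l1 * prodR l2.
Proof. induction l1 as [|x l1 IH]; simpl; [|rewrite IH]; ring. Qed.

Lemma sumR_ge0 l : (forall y, In y l -> 0 <= y) -> 0 <= sumR l.
Proof.
  induction l as [|x l IH]; simpl; intros H; [lra|].
  pose proof (H x (or_introl eq_refl)); pose proof (IH (fun y Hy => H y (or_intror Hy))); lra.
Qed.

Lemma In_le_sumR l x : (forall y, In y l -> 0 <= y) -> In x l -> x <= sumR l.
Proof.
  induction l as [|y l IH]; simpl; intros H Hx; [contradiction|].
  pose proof (H y (or_introl eq_refl)).
  assert (Hl : forall z, In z l -> 0 <= z) by auto.
  destruct Hx as [<-|Hx]; [pose proof (sumR_ge0 l Hl) | pose proof (IH Hl Hx)]; lra.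
Qed.

Lemma In_words n k w : In w (words n k) -> valid_word n w /\ length w = k.
Proof.
  revert w; induction k as [|k IH]; simpl; intros w H.
  - destruct H as [<-|[]]; split; [constructor | reflexivity].
  - apply in_flat_map in H; destruct H as (i & Hi & Hw).
    apply in_map_iff in Hw; destruct Hw as (w' & <- & Hw').
    apply IH in Hw'; destruct Hw' as [V Hlen]; apply in_seq in Hi.
    split; [constructor; [lia|exact V] | simpl; lia].
Qed.

Lemma valid_In_words n w : valid_word n w -> In w (words n (length w)).
Proof.
  induction w as [|i w IH]; simpl; intros H; [auto|].
  inversion H; subst; apply in_flat_map; exists i.
  split; [apply in_seq; lia | apply in_map; auto].
Qed.

Lemma valid_word_concat_repeat n s k : valid_word n s -> valid_word n (concat (repeat s k)).
Proof. intros V; induction k as [|k IH]; simpl; [constructor | apply Forall_app; auto]. Qed.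

Lemma weval_concat_repeat n m s k : weval n m (concat (repeat s k)) = gpow (weval n m s) k.
Proof.
  apply functional_extensionality; intros x; induction k as [|k IH]; simpl; [reflexivity|].
  rewrite weval_app, IH; reflexivity.
Qed.

Lemma prodR_mu_concat_repeat (mu : nat -> R) s k :
  prodR (map mu (concat (repeat s k))) = prodR (map mu s) ^ k.
Proof. induction k as [|k IH]; simpl; [|rewrite map_app, prodR_app, IH]; reflexivity. Qed.

Section RandomWalk.

Variables (n m : nat) (mu : nat -> R).
Hypotheses (Hmu_pos : forall i, (i < n)%nat -> 0 < mu i)
  (Hmu_sum : sumR (map mu (seq 0 n)) = 1).

Lemma mu_le1 i : (i < n)%nat -> mu i <= 1.
Proof.
  intros Hi; rewrite <- Hmu_sum; apply In_le_sumR.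
  - intros y Hy; apply in_map_iff in Hy; destruct Hy as (j & <- & Hj); apply in_seq in Hj.
    left; apply Hmu_pos; lia.
  - apply in_map, in_seq; lia.
Qed.

Lemma prodR_mu_bounds w : valid_word n w -> 0 < prodR (map mu w) <= 1.
Proof.
  induction w as [|i w IH]; simpl; intros H; [lra|].
  inversion H as [|? ? Hi Hw]; subst.
  destruct (IH Hw); pose proof (Hmu_pos i Hi); pose proof (mu_le1 i Hi); split; nra.
Qed.

Lemma ln_prodR_mu w : valid_word n w ->
  ln (prodR (map mu w)) = sumR (map (fun i => ln (mu i)) w).
Proof.
  induction w as [|i w IH]; simpl; intros H; [apply ln_1|].
  inversion H as [|? ? Hi Hw]; subst.
  rewrite ln_mult, IH by (exact Hw || apply Hmu_pos, Hi || apply prodR_mu_bounds, Hw).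
  reflexivity.
Qed.

Lemma first_hit_weight_ge0 x w : valid_word n w -> 0 <= first_hit_weight n m mu x w.
Proof.
  intros V; unfold first_hit_weight, indic; destruct (prodR_mu_bounds w V).
  destruct (excluded_middle_informative _); lra.
Qed.

Lemma first_hit_sum_ge0 x k : 0 <= sumR (map (first_hit_weight n m mu x) (words n k)).
Proof.
  apply sumR_ge0; intros y Hy; apply in_map_iff in Hy; destruct Hy as (w & <- & Hw).
  apply first_hit_weight_ge0, (In_words n k w Hw).
Qed.

Lemma hit_upto_le_S x N : hit_upto n m mu x N <= hit_upto n m mu x (S N).
Proof.
  unfold hit_upto; rewrite (seq_S (S N)), map_app, sumR_app.
  pose proof (first_hit_sum_ge0 x (0 + S N)); cbn [map sumR fold_right] in *; lra.
Qed.

Lemma first_hit_weight_le_hit_upto x w N : valid_word n w -> (length w <= N)%nat ->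
  first_hit_weight n m mu x w <= hit_upto n m mu x N.
Proof.
  intros V HN; unfold hit_upto.
  apply Rle_trans with (sumR (map (first_hit_weight n m mu x) (words n (length w)))).
  - apply In_le_sumR; [|apply in_map, valid_In_words, V].
    intros y Hy; apply in_map_iff in Hy; destruct Hy as (w0 & <- & Hw0).
    apply first_hit_weight_ge0, (In_words n _ w0 Hw0).
  - apply In_le_sumR.
    + intros y Hy; apply in_map_iff in Hy; destruct Hy as (k & <- & _).
      apply first_hit_sum_ge0.
    + apply in_map_iff; exists (length w); split; [reflexivity | apply in_seq; lia].
Qed.

(** The first prefix of [w] reaching [x] is a first-hit path whose weight
    dominates that of [w], since all weights are at most [1]. *)
Lemma prodR_le_hit_upto x w N : valid_word n w -> weval n m w = x -> (length w <= N)%nat ->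
  prodR (map mu w) <= hit_upto n m mu x N.
Proof.
  intros V E HN.
  destruct (dec_inh_nat_subset_has_unique_least_element
              (fun j => weval n m (firstn j w) = x))
    as (j & [Hj Hleast] & _).
  { intros j; apply Classical_Prop.classic. }
  { exists (length w); rewrite firstn_all; exact E. }
  assert (Hjw : (j <= length w)%nat) by (apply Hleast; rewrite firstn_all; exact E).
  pose proof (firstn_skipn j w) as Hsplit.
  assert (V' : valid_word n (firstn j w) /\ valid_word n (skipn j w)).
  { unfold valid_word in *; rewrite <- Hsplit in V; apply Forall_app in V; exact V. }
  destruct V' as [V1 V2].
  assert (Hprefix : prodR (map mu w) <= prodR (map mu (firstn j w))).
  { rewrite <- Hsplit at 1; rewrite map_app, prodR_app.
    destruct (prodR_mu_bounds _ V1), (prodR_mu_bounds _ V2); nra. }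
  assert (Hhit : first_hit_weight n m mu x (firstn j w) = prodR (map mu (firstn j w))).
  { unfold first_hit_weight, indic.
    destruct (excluded_middle_informative _) as [_|NH]; [ring|].
    exfalso; apply NH; split; [exact Hj|].
    intros i Hi Hix; rewrite length_firstn in Hi; rewrite firstn_firstn in Hix.
    assert (j <= Init.Nat.min i j)%nat by (apply Hleast; exact Hix); lia. }
  rewrite <- Hhit in Hprefix; apply (Rle_trans _ _ _ Hprefix).
  apply first_hit_weight_le_hit_upto; [exact V1 | rewrite length_firstn; lia].
Qed.

(** [real] sends an infinite limit to [0]; the bound still holds then since
    [- ln 0 = 0 <= - ln P0]. *)
Lemma d_mu_e_le x N P0 : 0 < P0 <= 1 -> P0 <= hit_upto n m mu x N ->
  d_mu_e n m mu x <= - ln P0.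
Proof.
  intros HP0 HN.
  assert (Hln : ln P0 <= 0) by (rewrite <- ln_1; apply ln_le; lra).
  unfold d_mu_e, F_mu_e, hit_prob.
  pose proof (Lim_seq_correct _ (ex_lim_seq_incr _ (hit_upto_le_S x))) as Hlim.
  destruct (Lim_seq (hit_upto n m mu x)) as [l| |]; simpl.
  - pose proof (is_lim_seq_incr_compare _ l Hlim (hit_upto_le_S x) N).
    pose proof (ln_le P0 l); lra.
  - rewrite ln_nonpos by lra; lra.
  - rewrite ln_nonpos by lra; lra.
Qed.

Lemma d_mu_e_gpow_le s k : valid_word n s ->
  d_mu_e n m mu (gpow (weval n m s) k) <= - (INR k * ln (prodR (map mu s))).
Proof.
  intros V; destruct (prodR_mu_bounds s V) as [P0 P1].
  rewrite <- ln_pow by exact P0.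
  apply d_mu_e_le with (N := length (concat (repeat s k))).
  - split; [apply pow_lt, P0 | rewrite <- (pow1 k); apply pow_incr; lra].
  - rewrite <- prodR_mu_concat_repeat.
    apply prodR_le_hit_upto; [apply valid_word_concat_repeat, V | apply weval_concat_repeat | lia].
Qed.

End RandomWalk.

Lemma exists_nat_mul_gt a b : 0 < a -> exists k : nat, (1 <= k)%nat /\ b < INR k * a.
Proof.
  intros Ha; destruct (INR_unbounded (b / a)) as [N HN].
  exists (S N); split; [lia|].
  rewrite S_INR; apply Rmult_lt_compat_r with (r := a) in HN; [|exact Ha].
  unfold Rdiv in HN; rewrite Rmult_assoc, Rinv_l in HN by lra; nra.
Qed.

Theorem lemma3 (n m : nat) (Hnm : Gamma_defined n m)
  (mu : nat -> R)
  (Hmu_pos : forall i, (i < n)%nat -> 0 < mu i)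
  (Hmu_sum : sumR (map mu (seq 0 n)) = 1)
  (g : vec -> vec) (Hg : in_Gamma n m g)
  (L : R) (Hhyp : hyperbolic_with g L)
  (s : list nat) (Hs_valid : valid_word n s) (Hs_eval : weval n m s = g)
  (Hs_len : word_length_is n m g (length s))
  (HL : L > - sumR (map (fun i => ln (mu i)) s))
  (x0 : vec) (Hx0 : H2 x0) (Hstab : trivial_stabilizer n m x0) :
  forall M : R, exists k : nat, (1 <= k)%nat /\
    Rabs (d_mu_e n m mu (gpow g k) - d_geo_e x0 (gpow g k)) > M.
Proof.
  intros M; subst g.
  rewrite <- (ln_prodR_mu n mu Hmu_pos Hmu_sum s Hs_valid) in HL.
  destruct (exists_nat_mul_gt (L + ln (prodR (map mu s))) (M + ln 2)) as (k & Hk & HkM); [lra|].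
  exists k; split; [exact Hk|].
  pose proof (d_mu_e_gpow_le n m mu Hmu_pos Hmu_sum s k Hs_valid) as Hmu.
  pose proof (hdist_gpow_ge _ L x0 k (linear_map_weval n m s)
                (lorentz_isometry_weval n m Hnm s) Hhyp Hx0) as Hgeo.
  unfold d_geo_e; rewrite Rabs_minus_sym.
  eapply Rlt_le_trans; [|apply Rle_abs]; lra.
Qed.
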